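(* Let $\sigma$ be an sp-formula that contains the diamond $\Diamond_S$ but does not contain $\Diamond_R$, and let $q$ be a propositional variable not occurring in $\sigma$. Then the spi-logic $\mathsf{SPi}+\{\Diamond_R\sigma\to q\}$ is incomplete.
   Context: Multimodal setting with a signature of relation symbols and diamonds $\Diamond_R$. Sp-formulas: built from propositional variables and $\top$ by $\wedge$ and the diamonds; sp-implications $\sigma\to\tau$. A SLO is an algebra $(A,\wedge,\top,\Diamond_R)_R$ with $(A,\wedge,\top)$ a meet-semilattice with top and each $\Diamond_R$ monotone; it validates $\sigma\to\tau$ if $\sigma[\mathfrak a]\le\tau[\mathfrak a]$ for all valuations. Frames $(W,R^{\mathfrak F})_R$ with standard Kripke semantics. $\Sigma\models_{\mathsf{Kr}}\iota$ (resp. $\models_{\mathsf{SLO}}$): valid in all frames (resp. SLOs) validating $\Sigma$. $\mathsf{SPi}+\Sigma$ is complete if $\Sigma\models_{\mathsf{Kr}}\iota\iff\Sigma\models_{\mathsf{SLO}}\iota$ for every sp-implication $\iota$, and incomplete otherwise. *)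

Set Implicit Arguments.

Section Syntax.
Variable Sig : Type. (* relation symbols; propositional variables are nat *)

Inductive spf : Type :=
| Var : nat -> spf
| Top : spf
| And : spf -> spf -> spf
| Dia : Sig -> spf -> spf.

Record spi : Type := Imp { ante : spf; cons : spf }.

Fixpoint has_dia (r : Sig) (f : spf) : Prop :=
  match f with
  | Var _ => False
  | Top => False
  | And a b => has_dia r a \/ has_dia r b
  | Dia s a => s = r \/ has_dia r a
  end.

Fixpoint has_var (p : nat) (f : spf) : Prop :=
  match f with
  | Var q => q = p
  | Top => False
  | And a b => has_var p a \/ has_var p b
  | Dia _ a => has_var p a
  end.

Record SLO : Type := {
  carrier :> Type;
  meet : carrier -> carrier -> carrier;
  top : carrier;
  dia : Sig -> carrier -> carrier;
  meetA : forall x y z, meet x (meet y z) = meet (meet x y) z;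
  meetC : forall x y, meet x y = meet y x;
  meetI : forall x, meet x x = x;
  meetT : forall x, meet x top = x;
  dia_mono : forall r x y, meet x y = x -> meet (dia r x) (dia r y) = dia r x
}.

Definition sle (A : SLO) (x y : A) : Prop := meet A x y = x.

Fixpoint sval (A : SLO) (v : nat -> A) (f : spf) : A :=
  match f with
  | Var p => v p
  | Top => top A
  | And a b => meet A (sval A v a) (sval A v b)
  | Dia r a => dia A r (sval A v a)
  end.

Definition slo_valid (A : SLO) (i : spi) : Prop :=
  forall v : nat -> A, sle A (sval A v (ante i)) (sval A v (cons i)).

Record frame : Type := {
  world : Type;
  acc : Sig -> world -> world -> Prop
}.

Fixpoint sat (F : frame) (V : nat -> world F -> Prop) (w : world F) (f : spf) : Prop :=
  match f with
  | Var p => V p w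
  | Top => True
  | And a b => sat F V w a /\ sat F V w b
  | Dia r a => exists u, acc F r w u /\ sat F V u a
  end.

Definition frame_valid (F : frame) (i : spi) : Prop :=
  forall (V : nat -> world F -> Prop) (w : world F), sat F V w (ante i) -> sat F V w (cons i).

Definition kr_entails (Sg : spi -> Prop) (i : spi) : Prop :=
  forall F : frame, (forall j, Sg j -> frame_valid F j) -> frame_valid F i.

Definition slo_entails (Sg : spi -> Prop) (i : spi) : Prop :=
  forall A : SLO, (forall j, Sg j -> slo_valid A j) -> slo_valid A i.

Definition complete (Sg : spi -> Prop) : Prop :=
  forall i : spi, kr_entails Sg i <-> slo_entails Sg i.

Definition incomplete (Sg : spi -> Prop) : Prop := ~ complete Sg.

End Syntax.

(* If a frame validates [<>_R sigma -> q] with [q] fresh for [sigma], it does so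
   under the valuation making [q] false everywhere, so no world has an R-successor
   satisfying [sigma]; hence the frame also validates [<>_S <>_R sigma -> q].
   The SLO on [Prop] whose diamond [<>_r] is the constant [r <> R] validates every
   [<>_R tau -> q], since the antecedent is [False], but refutes
   [<>_S <>_R sigma -> q] when [q] is [False], because [S <> R]. *)
From Stdlib Require Import PropExtensionality PeanoNat.

Set Implicit Arguments.

Section Incompleteness.
Variable Sig : Type.

Lemma sat_ext_var (F : frame Sig) (V V' : nat -> world F -> Prop) (f : spf Sig) :
  (forall p, has_var p f -> forall x, V p x <-> V' p x) ->
  forall w, sat F V w f <-> sat F V' w f.
Proof.
  induction f as [p| |a IHa b IHb|r a IHa]; simpl; intros HV w.
  - now apply HV.
  - tauto.
  - rewrite IHa, IHb by (intros; apply HV; tauto). tauto.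
  - split; intros [u [Hu Hs]]; exists u; split; trivial; apply (IHa HV); trivial.
Qed.

Lemma frame_valid_fresh_var_unsat (F : frame Sig) (f : spf Sig) (q : nat) :
  ~ has_var q f -> frame_valid F (Imp f (Var Sig q)) ->
  forall V w, ~ sat F V w f.
Proof.
  intros Hq Hvalid V w Hsat.
  set (Vq := fun p x => if Nat.eq_dec p q then False else V p x).
  assert (Hsat_q : sat F Vq w f).
  { apply (sat_ext_var F V Vq f); trivial.
    intros p Hp x; unfold Vq.
    destruct (Nat.eq_dec p q); [subst; contradiction | tauto]. }
  pose proof (Hvalid Vq w Hsat_q) as Hqw; simpl in Hqw; unfold Vq in Hqw.
  destruct (Nat.eq_dec q q); [exact Hqw | congruence].
Qed.

Lemma kr_entails_dia_fresh_var (S : Sig) (f tau : spf Sig) (q : nat) :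
  ~ has_var q f ->
  kr_entails (fun j => j = Imp f (Var Sig q)) (Imp (Dia S f) tau).
Proof.
  intros Hq F HF V w [u [_ Hu]]; exfalso.
  exact (frame_valid_fresh_var_unsat Hq (HF _ eq_refl) V u Hu).
Qed.

Definition const_dia_slo (R : Sig) : SLO Sig.
Proof.
  refine (@Build_SLO Sig Prop and True (fun r _ => r <> R) _ _ _ _ _);
    intros; apply propositional_extensionality; tauto.
Defined.

Lemma const_dia_slo_valid_dia (R : Sig) (f tau : spf Sig) :
  slo_valid (const_dia_slo R) (Imp (Dia R f) tau).
Proof.
  intros v; unfold sle; simpl.
  apply propositional_extensionality; split; [tauto|].
  intros HRR; contradiction.
Qed.

Lemma const_dia_slo_refutes_dia_var (R S : Sig) (f : spf Sig) (q : nat) :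
  S <> R -> ~ slo_valid (const_dia_slo R) (Imp (Dia S f) (Var Sig q)).
Proof.
  intros HSR Hvalid.
  specialize (Hvalid (fun _ => False)); unfold sle in Hvalid; simpl in Hvalid.
  rewrite <- Hvalid in HSR; tauto.
Qed.

End Incompleteness.

Theorem theorem5p25 (Sig : Type) (R S : Sig) (sigma : spf Sig) (q : nat) :
  has_dia S sigma -> ~ has_dia R sigma -> ~ has_var q sigma ->
  incomplete (fun j => j = Imp (Dia R sigma) (Var Sig q)).
Proof.
  intros HS HR Hq Hcomplete.
  assert (HSR : S <> R) by (intros ->; contradiction).
  set (i := Imp (Dia S (Dia R sigma)) (Var Sig q)).
  assert (Hkr : kr_entails (fun j => j = Imp (Dia R sigma) (Var Sig q)) i)
    by (apply kr_entails_dia_fresh_var; exact Hq).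
  apply (const_dia_slo_refutes_dia_var (f := Dia R sigma) (q := q) HSR).
  apply (proj1 (Hcomplete i) Hkr).
  intros j ->; apply const_dia_slo_valid_dia.
Qed.
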